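(* Let $D$ be a diagram of a link $L$, fix $a^*\in A(D)$, and for $a\in A(D)$ let $d_a=\beta_a\beta_{a^*}^{-1}\in Dis(MQ(L))$. Then: (1) the abelian group $Dis(MQ(L))$ is a $\Lambda$-module with scalar multiplication determined by $m\cdot d=d^m$ and $t^n\cdot d=\beta_{a^*}^n d\beta_{a^*}^{-n}$ for all $m,n\in\mathbb Z$, $d\in Dis(MQ(L))$; (2) at every crossing of $D$, in additive notation, $(1-t)\cdot d_{a_1}+t\cdot d_{a_2}-d_{a_3}=0$; (3) the set $\{d_a:a\in A(D)\}$ generates $Dis(MQ(L))$ as a $\Lambda$-module.
   Context: $\Lambda=\mathbb Z[t^{\pm1}]$. Let $L$ be an oriented classical link with diagram $D$; $A(D)$ is the set of arcs of $D$. At a crossing, $a_1$ denotes the overpassing arc, $a_2$ the underpassing arc on the right of $a_1$ (with respect to the orientation of $a_1$), $a_3$ the underpassing arc on the left of $a_1$. A quandle is a set $Q$ with a binary operation $\triangleright$ such that $x\triangleright x=x$, each translation $\beta_y(x)=x\triangleright y$ is a bijection, and $(x\triangleright y)\triangleright z=(x\triangleright z)\triangleright(y\triangleright z)$. It is medial if $(w\triangleright x)\triangleright(y\triangleright z)=(w\triangleright y)\triangleright(x\triangleright z)$ for all $w,x,y,z$. The displacement group $Dis(Q)$ is the subgroup of the automorphism group of $Q$ generated by all $\beta_y\beta_z^{-1}$; for medial $Q$ it is abelian. $MQ(L)$ is the medial quandle generated by $A(D)$ subject to $a_2\triangleright a_1=a_3$ at every crossing; arcs $a\in A(D)$ are regarded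 as elements of $MQ(L)$. Equivalently, with $MG(L)$ the group generated by $A(D)$ subject to (i) $c_1c_2^{-1}c_3=c_3c_2^{-1}c_1$ for conjugates $c_1,c_2,c_3$ of elements of $A(D)$ and (ii) $a_1a_2a_1^{-1}=a_3$ at every crossing, $MQ(L)$ is the set of conjugates of elements of $A(D)$ in $MG(L)$ with $x\triangleright y=yxy^{-1}$. *)

From HB Require Import structures.
From mathcomp Require Import all_boot all_order all_algebra fraction.
From Stdlib Require Import ClassicalEpsilon.
Set Implicit Arguments. Unset Strict Implicit. Unset Printing Implicit Defensive.
Import GRing.Theory.

(* x ▷ y is written [qop Q x y]; beta_y = fun x => qop Q x y. *)
Record quandle := Quandle {
  qcarrier :> Type;
  qop : qcarrier -> qcarrier -> qcarrier;
  qop_idem : forall x, qop x x = x;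
  qop_bij : forall y, bijective (fun x => qop x y);
  qop_rdist : forall x y z, qop (qop x y) z = qop (qop x z) (qop y z)
}.

Definition medial (Q : quandle) : Prop :=
  forall w x y z : Q, qop (qop w x) (qop y z) = qop (qop w y) (qop x z).

Definition beta (Q : quandle) (y : Q) : Q -> Q := fun x => qop x y.

Lemma beta_inv_ex (Q : quandle) (y : Q) :
  exists g : Q -> Q, cancel (beta y) g /\ cancel g (beta y).
Proof. by case: (qop_bij y) => g h1 h2; exists g. Qed.

Definition beta_inv (Q : quandle) (y : Q) : Q -> Q :=
  proj1_sig (constructive_indefinite_description _ (beta_inv_ex y)).

Definition qhom (Q Q' : quandle) (f : Q -> Q') : Prop :=
  forall x y : Q, f (qop x y) = qop (f x) (f y).

(* Dis(Q): the subgroup of Aut(Q) generated by all beta_y beta_z^{-1}.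
   Its elements (as functions Q -> Q) are the finite words in these
   generators; the set of generators is closed under inverses
   ((beta_y beta_z^{-1})^{-1} = beta_z beta_y^{-1}), so the generated
   subgroup is the closure of id under left multiplication by generators. *)
Inductive Dis (Q : quandle) : (Q -> Q) -> Prop :=
  | Dis_id : Dis id
  | Dis_mul (y z : Q) (f : Q -> Q) :
      Dis f -> Dis (beta y \o beta_inv z \o f).

(* A diagram is given by its finite set of arcs A and its list of crossings;
   a crossing is recorded as the triple (a1, a2, a3): a1 overpassing arc,
   a2 underpassing arc on the right of a1, a3 underpassing arc on the left. *)
Definition crossing (A : Type) := (A * A * A)%type.
Definition cr_over (A : Type) (c : crossing A) : A := c.1.1.
Definition cr_right (A : Type) (c : crossing A) : A := c.1.2.
Definition cr_left (A : Type) (c : crossing A) : A := c.2.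

Definition respects_crossings (A : eqType) (cr : seq (crossing A))
    (Q : quandle) (f : A -> Q) : Prop :=
  forall c, c \in cr -> qop (f (cr_right c)) (f (cr_over c)) = f (cr_left c).

(* (Q, iota) is the medial quandle MQ(L) presented by generators A and the
   crossing relations: universal property among medial quandles. *)
Definition is_MQ (A : eqType) (cr : seq (crossing A))
    (Q : quandle) (iota : A -> Q) : Prop :=
  [/\ medial Q, respects_crossings cr iota &
   forall (Q' : quandle) (f : A -> Q'), medial Q' -> respects_crossings cr f ->
     exists g : Q -> Q', [/\ qhom g, (forall a, g (iota a) = f a) &
       forall g' : Q -> Q', qhom g' -> (forall a, g' (iota a) = f a) ->
         forall x, g' x = g x]].

(* Realised inside the fraction field of Z[t] as the elements p / t^k. *)
Local Open Scope ring_scope.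
Definition fracZt := {fraction {poly int}}.
Definition tofracZt (p : {poly int}) : fracZt := @FracField.tofrac _ p.
Definition tL : fracZt := tofracZt 'X.
Definition in_Lambda (l : fracZt) : Prop :=
  exists (p : {poly int}) (k : nat), l = tofracZt p / tL ^+ k.

Definition d_arc (Q : quandle) (astar a : Q) : Q -> Q :=
  beta a \o beta_inv astar.

From HB Require Import structures.
From mathcomp Require Import all_boot all_order all_algebra.
From mathcomp Require boolp.
From Stdlib Require Import ClassicalEpsilon.
Set Implicit Arguments. Unset Strict Implicit. Unset Printing Implicit Defensive.
Import GRing.Theory.
Local Open Scope ring_scope.

(* In a medial quandle the displacement generators commute, since mediality
   reads [beta y \o beta_inv z \o beta x = beta x \o beta_inv z \o beta y];
   so Dis is an abelian group on which conjugation by [beta a*] is an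
   automorphism T.  An abelian group with an automorphism is a Lambda-module,
   [p / t^k] acting as [T^-k \o p(T)].  For [d_y = beta y \o beta_inv a*],
   the identity [beta (y |> v) = beta v \o beta y \o beta_inv v] gives
   [d_(y |> v) = t d_y + (1 - t) d_v]: this is the crossing relation, and by
   induction over the subquandle generated by the arcs (all of MQ(L), by its
   universal property) it puts every [d_y], hence every
   [beta y \o beta_inv z = d_y - d_z], in the Lambda-span of the arcs. *)

Lemma iter_can (X : Type) (f g : X -> X) n : cancel f g -> cancel (iter n f) (iter n g).
Proof. by move=> fK; elim: n => // n IH x; rewrite iterSr iterS fK IH. Qed.

Lemma iter_commute (X : Type) (f g : X -> X) n :
  (forall x, f (g x) = g (f x)) -> forall x, iter n f (g x) = g (iter n f x).
Proof. by move=> fg; elim: n => // n IH x; rewrite !iterS IH fg. Qed.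

Section IterAdditive.
Variables (V : zmodType) (f : {additive V -> V}).

Lemma iter_is_zmod_morphism n : zmod_morphism (iter n f).
Proof. by elim: n => [//|n IH] a b /=; rewrite IH raddfB. Qed.

HB.instance Definition _ n :=
  GRing.isZmodMorphism.Build V V (iter n f) (iter_is_zmod_morphism n).
End IterAdditive.

Lemma tL_neq0 : tL != 0.
Proof. by rewrite tofrac_eq0 polyX_eq0. Qed.

Lemma tofracZt_Xn k : tofracZt 'X^k = tL ^+ k.
Proof. exact: tofracXn. Qed.

Lemma laurent_eq p k q j :
  tofracZt p / tL ^+ k = tofracZt q / tL ^+ j -> p * 'X^j = q * 'X^k.
Proof.
move/eqP; rewrite eqr_div ?expf_neq0 ?tL_neq0 // -!tofracZt_Xn /tofracZt.
by rewrite -!tofracM tofrac_eq => /eqP.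
Qed.

Lemma laurent_fracD p k q j : tofracZt p / tL ^+ k + tofracZt q / tL ^+ j =
  tofracZt (p * 'X^j + q * 'X^k) / tL ^+ (k + j).
Proof.
by rewrite addf_div ?expf_neq0 ?tL_neq0 // exprD /tofracZt tofracD !tofracM !tofracXn.
Qed.

Lemma laurent_fracM p k q j :
  (tofracZt p / tL ^+ k) * (tofracZt q / tL ^+ j) = tofracZt (p * q) / tL ^+ (k + j).
Proof. by rewrite mulf_div exprD /tofracZt tofracM. Qed.

Lemma laurent_fracN p k : - (tofracZt p / tL ^+ k) = tofracZt (- p) / tL ^+ k.
Proof. by rewrite /tofracZt tofracN mulNr. Qed.

Lemma in_LambdaM l m : in_Lambda l -> in_Lambda m -> in_Lambda (l * m).
Proof. by move=> [p [k ->]] [q [j ->]]; rewrite laurent_fracM; do 2!eexists. Qed.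

Lemma in_LambdaN l : in_Lambda l -> in_Lambda (- l).
Proof. by move=> [p [k ->]]; rewrite laurent_fracN; do 2!eexists. Qed.

Lemma in_Lambda_poly p : in_Lambda (tofracZt p).
Proof. by exists p, 0%N; rewrite divr1. Qed.

Lemma in_Lambda_t : in_Lambda tL.
Proof. exact: in_Lambda_poly. Qed.

Lemma in_Lambda1 : in_Lambda 1.
Proof. by rewrite -tofrac1; apply: in_Lambda_poly. Qed.

Lemma in_LambdaV_t : in_Lambda tL^-1.
Proof. by exists 1, 1%N; rewrite expr1 /tofracZt tofrac1 div1r. Qed.

Section LaurentAction.
Variables (V : zmodType) (T Ti : {additive V -> V}).
Hypotheses (TK : cancel T Ti) (TiK : cancel Ti T).

Definition poly_act (p : {poly int}) (v : V) : V :=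
  \sum_(i < size p) iter i T v *~ p`_i.

Lemma poly_act_is_zmod_morphism p : zmod_morphism (poly_act p).
Proof.
move=> a b; rewrite /poly_act -sumrB; apply: eq_bigr => i _.
by rewrite raddfB mulrzBl.
Qed.

HB.instance Definition _ p :=
  GRing.isZmodMorphism.Build V V (poly_act p) (poly_act_is_zmod_morphism p).

Lemma poly_act_widen n (p : {poly int}) v : (size p <= n)%N ->
  poly_act p v = \sum_(i < n) iter i T v *~ p`_i.
Proof.
move=> le_p_n; rewrite /poly_act (big_ord_widen n (fun i => iter i T v *~ p`_i)) //.
rewrite big_mkcond /=; apply: eq_bigr => i _; case: ltnP => // le_p_i.
by rewrite nth_default // mulr0z.
Qed.

Lemma poly_actD p q v : poly_act (p + q) v = poly_act p v + poly_act q v.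
Proof.
set n := maxn (size p) (size q).
rewrite !(@poly_act_widen n) ?leq_maxl ?leq_maxr ?(leq_trans (size_polyD _ _)) //.
by rewrite -big_split; apply: eq_bigr => i _; rewrite coefD mulrzDr.
Qed.

Lemma poly_actN p v : poly_act (- p) v = - poly_act p v.
Proof.
by rewrite /poly_act size_polyN -sumrN; apply: eq_bigr => i _; rewrite coefN mulrNz.
Qed.

Lemma poly_actC c v : poly_act c%:P v = v *~ c.
Proof. by rewrite (@poly_act_widen 1) ?size_polyC ?leq_b1 // big_ord1 coefC. Qed.

Lemma poly_act_scale c p v : poly_act (c%:P * p) v = poly_act p v *~ c.
Proof.
rewrite mul_polyC (@poly_act_widen (size p)) ?size_scale_leq // /poly_act mulrz_suml.
by apply: eq_bigr => i _; rewrite coefZ mulrzA mulrzAC.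
Qed.

Lemma poly_actMX p v : poly_act (p * 'X) v = T (poly_act p v).
Proof.
rewrite (@poly_act_widen (size p).+1); last first.
  by have [->|nz_p] := eqVneq p 0; rewrite ?mul0r ?size_poly0 ?size_mulX.
rewrite big_ord_recl coefMX mulr0z add0r raddf_sum.
by apply: eq_bigr => i _; rewrite coefMX raddfMz.
Qed.

Lemma poly_actM p q v : poly_act (p * q) v = poly_act p (poly_act q v).
Proof.
elim/poly_ind: p => [|p c IH]; first by rewrite mul0r /poly_act size_poly0 !big_ord0.
rewrite mulrDl poly_actD mulrAC poly_actMX IH poly_act_scale.
by rewrite poly_actD poly_actMX poly_actC.
Qed.

Lemma poly_act1 v : poly_act 1 v = v.
Proof. by rewrite -polyC1 poly_actC. Qed.

Lemma poly_actX v : poly_act 'X v = T v.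
Proof. by rewrite -[X in poly_act X]mul1r poly_actMX poly_act1. Qed.

Lemma poly_actXn n v : poly_act 'X^n v = iter n T v.
Proof. by elim: n => [|n IH]; rewrite ?expr0 ?poly_act1 // exprSr poly_actMX IH. Qed.

Lemma poly_actT p v : poly_act p (T v) = T (poly_act p v).
Proof. by rewrite -poly_actMX -{1}[T v]poly_actX -poly_actM. Qed.

Lemma poly_act_iterTi n p v : poly_act p (iter n Ti v) = iter n Ti (poly_act p v).
Proof.
symmetry; apply: iter_commute => {}v.
by apply: (can_inj TK); rewrite TiK -poly_actT TiK.
Qed.

(* The representative [(p, k)] of [l = p / t^k] is picked by choice;
   [laurent_actE] shows that the action does not depend on it. *)
Definition laurent_rep (l : fracZt) : {poly int} * nat :=
  if excluded_middle_informative (in_Lambda l) is left l_in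
  then let: exist p pP := constructive_indefinite_description _ l_in in
       (p, projT1 (constructive_indefinite_description _ pP))
  else (0, 0%N).

Lemma laurent_repP l : in_Lambda l ->
  l = tofracZt (laurent_rep l).1 / tL ^+ (laurent_rep l).2.
Proof.
rewrite /laurent_rep; case: excluded_middle_informative => // l_in _.
case: constructive_indefinite_description => p pP /=.
by case: constructive_indefinite_description.
Qed.

Definition laurent_act (l : fracZt) : V -> V :=
  iter (laurent_rep l).2 Ti \o poly_act (laurent_rep l).1.

HB.instance Definition _ l := GRing.Additive.copy (laurent_act l)
  (iter (laurent_rep l).2 Ti \o poly_act (laurent_rep l).1).

Lemma iterTi_poly_actMXn j k p v :
  iter k Ti (poly_act p v) = iter (k + j) Ti (poly_act (p * 'X^j) v).
Proof. by rewrite mulrC poly_actM poly_actXn iterD iter_can. Qed.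

Lemma laurent_actE p k v :
  laurent_act (tofracZt p / tL ^+ k) v = iter k Ti (poly_act p v).
Proof.
set l := _ / _; have /laurent_repP := ex_intro _ p (ex_intro _ k erefl) : in_Lambda l.
rewrite {1}/l => /laurent_eq eq_pq.
by rewrite /laurent_act /= (iterTi_poly_actMXn k) -eq_pq addnC -iterTi_poly_actMXn.
Qed.

Lemma laurent_actD l m v : in_Lambda l -> in_Lambda m ->
  laurent_act (l + m) v = laurent_act l v + laurent_act m v.
Proof.
move=> [p [k ->]] [q [j ->]].
rewrite laurent_fracD !laurent_actE poly_actD raddfD /= -iterTi_poly_actMXn.
by rewrite addnC -iterTi_poly_actMXn.
Qed.

Lemma laurent_actM l m v : in_Lambda l -> in_Lambda m ->
  laurent_act (l * m) v = laurent_act l (laurent_act m v).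
Proof.
move=> [p [k ->]] [q [j ->]].
by rewrite laurent_fracM !laurent_actE poly_actM poly_act_iterTi iterD.
Qed.

Lemma laurent_actN l v : in_Lambda l -> laurent_act (- l) v = - laurent_act l v.
Proof. by move=> [p [k ->]]; rewrite laurent_fracN !laurent_actE poly_actN raddfN. Qed.

Lemma laurent_act_poly p v : laurent_act (tofracZt p) v = poly_act p v.
Proof. by rewrite -[tofracZt p]divr1 -(expr0 tL) laurent_actE. Qed.

Lemma laurent_act1 v : laurent_act 1 v = v.
Proof. by rewrite -tofrac1 laurent_act_poly poly_act1. Qed.

Lemma laurent_act_nat n v : laurent_act n%:R v = v *+ n.
Proof.
rewrite -(rmorph_nat (@FracField.tofrac _)) laurent_act_poly -polyC_natr poly_actC.
by rewrite pmulrn natz.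
Qed.

Lemma laurent_actN1 v : laurent_act (-1) v = - v.
Proof. by rewrite (laurent_actN _ in_Lambda1) laurent_act1. Qed.

Lemma laurent_act_tn n v : laurent_act (tL ^+ n) v = iter n T v.
Proof. by rewrite -tofracZt_Xn laurent_act_poly poly_actXn. Qed.

Lemma laurent_act_t v : laurent_act tL v = T v.
Proof. by rewrite -[tL]expr1 laurent_act_tn. Qed.

Lemma laurent_act_tNn n v : laurent_act (tL ^- n) v = iter n Ti v.
Proof. by rewrite -div1r -tofrac1 laurent_actE poly_act1. Qed.

Lemma laurent_act_tV v : laurent_act tL^-1 v = Ti v.
Proof. by rewrite -[tL]expr1 laurent_act_tNn. Qed.

End LaurentAction.

Section Translations.
Variable Q : quandle.

Lemma betaK (y : Q) : cancel (beta y) (beta_inv y).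
Proof. by rewrite /beta_inv; case: constructive_indefinite_description => g []. Qed.

Lemma beta_invK (y : Q) : cancel (beta_inv y) (beta y).
Proof. by rewrite /beta_inv; case: constructive_indefinite_description => g []. Qed.

Lemma qhom_beta_inv (phi : Q -> Q) : qhom phi ->
  forall y x, phi (beta_inv y x) = beta_inv (phi y) (phi x).
Proof.
move=> phi_hom y x; apply: (can_inj (betaK (phi y))).
by rewrite beta_invK {1}/beta -phi_hom -/(beta y _) beta_invK.
Qed.

Lemma beta_qhom (s : Q) : qhom (beta s).
Proof. by move=> x y; rewrite /beta qop_rdist. Qed.

Lemma beta_inv_qhom (s : Q) : qhom (beta_inv s).
Proof.
move=> x y; apply: (can_inj (betaK s)).
by rewrite {1}/beta beta_qhom -!/(beta s _) !beta_invK.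
Qed.

Lemma beta_qop (y z v : Q) : beta (qop y z) v = beta z (beta y (beta_inv z v)).
Proof. by rewrite -[v in LHS](beta_invK z) /beta -qop_rdist. Qed.

Lemma Dis_comp (f g : Q -> Q) : Dis f -> Dis g -> Dis (f \o g).
Proof. by move=> Df Dg; elim: Df => [|y z h _ Dhg]; last exact: Dis_mul. Qed.

Lemma Dis_ext (f g : Q -> Q) : Dis f -> f =1 g -> Dis g.
Proof. by move=> Df /boolp.funext <-. Qed.

Lemma Dis_conj (phi psi : Q -> Q) (f : Q -> Q) : qhom phi -> cancel psi phi ->
  Dis f -> Dis (phi \o f \o psi).
Proof.
move=> phi_hom psiK; elim=> [|y z h _ Dh].
  by apply: (Dis_ext (Dis_id _)) => x /=; rewrite psiK.
apply: (Dis_ext (Dis_mul (phi y) (phi z) Dh)) => x /=.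
by rewrite {2}/beta phi_hom (qhom_beta_inv phi_hom).
Qed.

Lemma Dis_inv (f : Q -> Q) : Dis f ->
  exists2 g, Dis g & cancel f g /\ cancel g f.
Proof.
elim=> [|y z h _ [g Dg [hK gK]]]; first by exists id; first exact: Dis_id.
exists (g \o (beta z \o beta_inv y)); first exact/Dis_comp/Dis_mul/Dis_id.
by split=> x /=; [rewrite betaK beta_invK hK | rewrite gK betaK beta_invK].
Qed.

Hypothesis Qmed : medial Q.

Lemma medial_beta (x y z w : Q) :
  beta y (beta_inv z (beta x w)) = beta x (beta_inv z (beta y w)).
Proof. by apply: (can_inj (betaK z)); rewrite -!beta_qop /beta Qmed. Qed.

Lemma medial_beta_inv (x y z v : Q) :
  beta_inv x (beta z (beta_inv y v)) = beta_inv y (beta z (beta_inv x v)).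
Proof.
apply: (can_inj (betaK x)); apply: (can_inj (beta_invK z)); apply: (can_inj (betaK y)).
by rewrite [RHS]medial_beta !beta_invK !betaK !beta_invK.
Qed.

Lemma displacement_gen_comm (a b c d w : Q) :
  beta a (beta_inv b (beta c (beta_inv d w))) =
  beta c (beta_inv d (beta a (beta_inv b w))).
Proof. by rewrite medial_beta medial_beta_inv. Qed.

Lemma Dis_comm_gen (a b : Q) (f : Q -> Q) : Dis f ->
  forall w, beta a (beta_inv b (f w)) = f (beta a (beta_inv b w)).
Proof. by elim=> [//|y z h _ IH] w /=; rewrite displacement_gen_comm IH. Qed.

Lemma Dis_comm (f g : Q -> Q) : Dis f -> Dis g -> forall x, f (g x) = g (f x).
Proof. by move=> Df Dg; elim: Df => [//|y z h _ IH] w /=; rewrite IH Dis_comm_gen. Qed.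

End Translations.

(* Mediality is bundled with the quandle so that [displacement M] can carry
   a commutative group law. *)
Record medial_quandle := MedialQuandle {
  mq_quandle :> quandle;
  mq_medial : medial mq_quandle
}.

Record displacement (M : medial_quandle) := Displacement {
  disp_fun :> M -> M;
  disp_Dis : Dis disp_fun
}.

Lemma displacement_ext (M : medial_quandle) (a b : displacement M) : a =1 b -> a = b.
Proof.
case: a b => [f Df] [g Dg] /boolp.funext /= eq_fg; subst g.
by rewrite (boolp.Prop_irrelevance Df Dg).
Qed.

HB.instance Definition _ (M : medial_quandle) := boolp.gen_eqMixin (displacement M).
HB.instance Definition _ (M : medial_quandle) := boolp.gen_choiceMixin (displacement M).

Section DisplacementGroup.
Variable M : medial_quandle.
Implicit Types a b c : displacement M.

Definition disp_add a b := Displacement (Dis_comp (disp_Dis a) (disp_Dis b)).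

Definition disp_zero := Displacement (Dis_id M).

Definition disp_opp a :=
  let: exist2 g Dg _ := boolp.cid2 (Dis_inv (disp_Dis a)) in Displacement Dg.

Lemma disp_oppK a : cancel a (disp_opp a).
Proof. by rewrite /disp_opp; case: boolp.cid2 => g Dg []. Qed.

Lemma disp_addA : associative disp_add.
Proof. by move=> a b c; apply: displacement_ext. Qed.

Lemma disp_addC : commutative disp_add.
Proof.
move=> a b; apply: displacement_ext => x.
exact: (Dis_comm (@mq_medial M) (disp_Dis a) (disp_Dis b) x).
Qed.

Lemma disp_add0 : left_id disp_zero disp_add.
Proof. by move=> a; apply: displacement_ext. Qed.

Lemma disp_addN : left_inverse disp_zero disp_opp disp_add.
Proof. by move=> a; apply: displacement_ext => x /=; rewrite disp_oppK. Qed.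

End DisplacementGroup.

HB.instance Definition _ (M : medial_quandle) := GRing.isZmodule.Build (displacement M)
  (@disp_addA M) (@disp_addC M) (@disp_add0 M) (@disp_addN M).

Section DisplacementZmod.
Variable M : medial_quandle.
Implicit Types a b : displacement M.

Lemma disp_addE a b x : (a + b) x = a (b x).
Proof. by []. Qed.

Lemma disp_oppE a x : (- a) (a x) = x.
Proof. exact: disp_oppK. Qed.

Lemma disp_mulrnE a n x : (a *+ n) x = iter n a x.
Proof. by elim: n x => // n IH x; rewrite mulrS disp_addE IH. Qed.

End DisplacementZmod.

Section Conjugation.
Variables (M : medial_quandle) (s : M).
Implicit Types a : displacement M.

Definition conj_beta a : displacement M :=
  Displacement (Dis_conj (beta_qhom s) (beta_invK s) (disp_Dis a)).

Definition conj_beta_inv a : displacement M :=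
  Displacement (Dis_conj (beta_inv_qhom s) (betaK s) (disp_Dis a)).

Lemma conj_beta_is_nmod_morphism : nmod_morphism conj_beta.
Proof. by split=> [|a b]; apply: displacement_ext => x /=; rewrite ?beta_invK ?betaK. Qed.

Lemma conj_beta_inv_is_nmod_morphism : nmod_morphism conj_beta_inv.
Proof. by split=> [|a b]; apply: displacement_ext => x /=; rewrite ?beta_invK ?betaK. Qed.

HB.instance Definition _ :=
  GRing.isNmodMorphism.Build _ _ conj_beta conj_beta_is_nmod_morphism.
HB.instance Definition _ :=
  GRing.isNmodMorphism.Build _ _ conj_beta_inv conj_beta_inv_is_nmod_morphism.

Lemma conj_betaK : cancel conj_beta conj_beta_inv.
Proof. by move=> a; apply: displacement_ext => x /=; rewrite !betaK. Qed.

Lemma conj_beta_invK : cancel conj_beta_inv conj_beta.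
Proof. by move=> a; apply: displacement_ext => x /=; rewrite !beta_invK. Qed.

Lemma iter_conj_beta n a x :
  iter n conj_beta a (iter n (beta s) x) = iter n (beta s) (a x).
Proof. by elim: n x => // n IH x; rewrite !iterS /= betaK IH. Qed.

Lemma iter_conj_beta_inv n a x :
  iter n (beta s) (iter n conj_beta_inv a x) = a (iter n (beta s) x).
Proof.
by elim: n x => // n IH x; rewrite iterSr [iter n.+1 _ a]iterS /= beta_invK IH -iterSr.
Qed.

End Conjugation.

Section GeneratedSubquandle.
Variables (Q : quandle) (S : Q -> Prop).

Inductive qgen : Q -> Prop :=
  | qgen_base x : S x -> qgen x
  | qgen_qop x y : qgen x -> qgen y -> qgen (qop x y)
  | qgen_beta_inv x y : qgen x -> qgen y -> qgen (beta_inv y x).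

Definition qgen_elt := {x : Q | qgen x}.

Lemma qgen_elt_ext (a b : qgen_elt) : sval a = sval b -> a = b.
Proof.
case: a b => [x qx] [y qy] /= eq_xy; subst y.
by rewrite (boolp.Prop_irrelevance qx qy).
Qed.

Definition subq_op (a b : qgen_elt) : qgen_elt :=
  exist _ (qop (sval a) (sval b)) (qgen_qop (svalP a) (svalP b)).

Definition subq_op_inv (b a : qgen_elt) : qgen_elt :=
  exist _ (beta_inv (sval b) (sval a)) (qgen_beta_inv (svalP a) (svalP b)).

Lemma subq_op_idem a : subq_op a a = a.
Proof. by apply: qgen_elt_ext; rewrite /= qop_idem. Qed.

Lemma subq_op_bij b : bijective (subq_op^~ b).
Proof.
by exists (subq_op_inv b) => a; apply: qgen_elt_ext; [exact: betaK | exact: beta_invK].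
Qed.

Lemma subq_op_rdist a b c : subq_op (subq_op a b) c = subq_op (subq_op a c) (subq_op b c).
Proof. by apply: qgen_elt_ext; rewrite /= qop_rdist. Qed.

Definition subquandle : quandle := Quandle subq_op_idem subq_op_bij subq_op_rdist.

Lemma subquandle_medial : medial Q -> medial subquandle.
Proof. by move=> Qmed w x y z; apply: qgen_elt_ext; rewrite /= Qmed. Qed.

End GeneratedSubquandle.

Lemma is_MQ_qgen (A : eqType) (cr : seq (crossing A)) (Q : quandle) (iota : A -> Q) :
  is_MQ cr iota -> forall x, qgen (fun y => exists a, y = iota a) x.
Proof.
move=> [Qmed iota_cr MQ_univ] x.
pose S y := exists a, y = iota a.
pose iotaS a : subquandle S := exist _ (iota a) (qgen_base (ex_intro _ a erefl)).
have iotaS_cr : respects_crossings cr iotaS.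
  by move=> c cr_c; apply: qgen_elt_ext; apply: iota_cr.
have [g [g_hom g_iota _]] := MQ_univ _ iotaS (subquandle_medial Qmed) iotaS_cr.
have [h [_ _ h_uniq]] := MQ_univ _ iota Qmed iota_cr.
have h_id : x = h x by apply: (h_uniq id).
have h_g : sval (g x) = h x.
  by apply: (h_uniq (sval \o g)) => [y z|a] /=; rewrite ?g_hom ?g_iota.
by rewrite h_id -h_g; apply: svalP.
Qed.

Section LambdaModule.
Variables (M : medial_quandle) (s : M).

Local Notation disp_act := (laurent_act (conj_beta s) (conj_beta_inv s)).
Let TK := conj_betaK s.
Let TiK := conj_beta_invK s.

(* Off Dis the action is the identity; only its values on Dis matter. *)
Definition Dis_act (l : fracZt) (d : M -> M) : M -> M :=
  if excluded_middle_informative (Dis d) is left Dd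
  then disp_act l (Displacement Dd) else d.

Lemma Dis_actE l d (Dd : Dis d) : Dis_act l d = disp_act l (Displacement Dd).
Proof.
rewrite /Dis_act; case: excluded_middle_informative => // Dd'.
by rewrite (boolp.Prop_irrelevance Dd' Dd).
Qed.

Lemma Dis_act_Dis l d : Dis d -> Dis (Dis_act l d).
Proof. by move=> Dd; rewrite (Dis_actE l Dd); apply: disp_Dis. Qed.

Lemma Dis_act_comp l d e : Dis d -> Dis e ->
  forall x, Dis_act l (d \o e) x = (Dis_act l d \o Dis_act l e) x.
Proof.
move=> Dd De x; rewrite (Dis_actE l (Dis_comp Dd De)) (Dis_actE l Dd) (Dis_actE l De).
by rewrite -[Displacement (Dis_comp Dd De)]/(Displacement Dd + Displacement De) raddfD.
Qed.

Lemma Dis_actD l m d : in_Lambda l -> in_Lambda m -> Dis d ->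
  forall x, Dis_act (l + m) d x = (Dis_act l d \o Dis_act m d) x.
Proof. by move=> Ll Lm Dd x; rewrite !(Dis_actE _ Dd) (laurent_actD TK _ Ll Lm). Qed.

Lemma Dis_actM l m d : in_Lambda l -> in_Lambda m -> Dis d ->
  forall x, Dis_act (l * m) d x = Dis_act l (Dis_act m d) x.
Proof.
move=> Ll Lm Dd x; rewrite (Dis_actE _ Dd) (Dis_actE m Dd).
rewrite (Dis_actE l (disp_Dis (disp_act m (Displacement Dd)))).
rewrite (laurent_actM TK TiK _ Ll Lm).
by congr (disp_fun (disp_act l _) x); apply: displacement_ext.
Qed.

Lemma Dis_act1 d : Dis d -> forall x, Dis_act 1 d x = d x.
Proof. by move=> Dd x; rewrite (Dis_actE _ Dd) (laurent_act1 TK). Qed.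

Lemma Dis_act_nat n d : Dis d -> forall x, Dis_act n%:R d x = iter n d x.
Proof. by move=> Dd x; rewrite (Dis_actE _ Dd) (laurent_act_nat TK) disp_mulrnE. Qed.

Lemma Dis_actN1 d : Dis d -> forall x, Dis_act (-1) d (d x) = x.
Proof. by move=> Dd x; rewrite (Dis_actE _ Dd) (laurent_actN1 TK) disp_oppE. Qed.

Lemma Dis_act_tn n d : Dis d ->
  forall x, Dis_act (tL ^+ n) d (iter n (beta s) x) = iter n (beta s) (d x).
Proof. by move=> Dd x; rewrite (Dis_actE _ Dd) (laurent_act_tn TK) iter_conj_beta. Qed.

Lemma Dis_act_tNn n d : Dis d ->
  forall x, iter n (beta s) (Dis_act (tL ^- n) d x) = d (iter n (beta s) x).
Proof. by move=> Dd x; rewrite (Dis_actE _ Dd) (laurent_act_tNn TK) iter_conj_beta_inv. Qed.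

Lemma Dis_d_arc y : Dis (d_arc s y).
Proof. exact (Dis_mul y s (Dis_id M)). Qed.

Definition disp_arc y := Displacement (Dis_d_arc y).

Lemma disp_arc_qop y v :
  disp_arc (qop y v) = conj_beta s (disp_arc y) + disp_arc v - conj_beta s (disp_arc v).
Proof.
apply: (addIr (conj_beta s (disp_arc v))); rewrite subrK [RHS]addrC.
by apply: displacement_ext => x; rewrite /= /d_arc /= !betaK beta_qop betaK.
Qed.

Lemma disp_arc_crossing a1 a2 a3 : qop a2 a1 = a3 ->
  disp_act (1 - tL) (disp_arc a1) + disp_act tL (disp_arc a2)
  + disp_act (-1) (disp_arc a3) = 0.
Proof.
move=> <-; have Lt := in_Lambda_t.
rewrite (laurent_actD TK _ in_Lambda1 (in_LambdaN Lt)) (laurent_actN TK _ Lt).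
rewrite (laurent_act1 TK) !(laurent_act_t TK) (laurent_actN1 TK).
by rewrite /= disp_arc_qop; apply/eqP; rewrite subr_eq0 addrC addrA.
Qed.

Lemma Dis_act_crossing a1 a2 a3 : qop a2 a1 = a3 -> forall x,
  (Dis_act (1 - tL) (d_arc s a1) \o Dis_act tL (d_arc s a2)
   \o Dis_act (-1) (d_arc s a3)) x = x.
Proof.
move=> cross x; rewrite /= !(Dis_actE _ (Dis_d_arc _)).
by rewrite -[LHS]/((_ + _ + _ : displacement M) x) (disp_arc_crossing cross).
Qed.

Variables (A : eqType) (iota : A -> M).

Definition arc_span (a : displacement M) : Prop :=
  exists2 sq : seq (fracZt * A), (forall p, p \in sq -> in_Lambda p.1) &
    a = \sum_(p <- sq) disp_act p.1 (disp_arc (iota p.2)).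

Lemma arc_span_arc a : arc_span (disp_arc (iota a)).
Proof.
exists [:: (1, a)] => [p|]; last by rewrite big_seq1 (laurent_act1 TK).
by rewrite inE => /eqP ->; apply: in_Lambda1.
Qed.

Lemma arc_span0 : arc_span 0.
Proof. by exists [::] => //; rewrite big_nil. Qed.

Lemma arc_spanD a b : arc_span a -> arc_span b -> arc_span (a + b).
Proof.
move=> [sa La ->] [sb Lb ->]; exists (sa ++ sb); last by rewrite big_cat.
by move=> p; rewrite mem_cat => /orP[/La|/Lb].
Qed.

Lemma arc_span_act l a : in_Lambda l -> arc_span a -> arc_span (disp_act l a).
Proof.
move=> Ll [sa La ->]; exists [seq (l * p.1, p.2) | p <- sa].
  by move=> _ /mapP[p /La Lp ->]; apply: in_LambdaM.
rewrite big_map raddf_sum; apply: eq_big_seq => p /La Lp.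
by rewrite (laurent_actM TK TiK).
Qed.

Lemma arc_spanN a : arc_span a -> arc_span (- a).
Proof. by rewrite -(laurent_actN1 TK); apply/arc_span_act/in_LambdaN/in_Lambda1. Qed.

Lemma arc_span_conj a : arc_span a -> arc_span (conj_beta s a).
Proof. by rewrite -(laurent_act_t TK); apply/arc_span_act/in_Lambda_t. Qed.

Lemma arc_span_conj_inv a : arc_span a -> arc_span (conj_beta_inv s a).
Proof. by rewrite -(laurent_act_tV TK); apply/arc_span_act/in_LambdaV_t. Qed.

Lemma arc_span_qgen y : qgen (fun y => exists a, y = iota a) y -> arc_span (disp_arc y).
Proof.
elim=> [_ [a ->]|u v _ Su _ Sv|u v _ Su _ Sv]; first exact: arc_span_arc.
  rewrite disp_arc_qop; apply: arc_spanD; last exact/arc_spanN/arc_span_conj.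
  exact: arc_spanD (arc_span_conj Su) Sv.
have -> : disp_arc (beta_inv v u) =
    conj_beta_inv s (disp_arc u + conj_beta s (disp_arc v) - disp_arc v).
  set w := beta_inv v u; have -> : u = qop w v by rewrite -[RHS]/(beta v w) beta_invK.
  by apply: (can_inj TK); rewrite TiK disp_arc_qop subrK addrK.
exact: arc_span_conj_inv (arc_spanD (arc_spanD Su (arc_span_conj Sv)) (arc_spanN Sv)).
Qed.

Lemma arc_span_Dis d : (forall x, qgen (fun y => exists a, y = iota a) x) ->
  Dis d -> forall Dd : Dis d, arc_span (Displacement Dd).
Proof.
move=> gen_iota; elim=> [|y z f Df IH] Dd.
  by rewrite (_ : Displacement Dd = 0); [apply: arc_span0 | apply: displacement_ext].
have -> : Displacement Dd = disp_arc y + Displacement Df - disp_arc z.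
  apply: (addIr (disp_arc z)); rewrite subrK; apply: displacement_ext => x /=.
  by rewrite /d_arc -(Dis_comm_gen (@mq_medial M) _ _ Df) betaK.
apply: arc_spanD; last exact/arc_spanN/arc_span_qgen.
exact: arc_spanD (arc_span_qgen (gen_iota y)) (IH Df).
Qed.

Lemma Dis_act_sum_arcs (sq : seq (fracZt * A)) x :
  (\sum_(p <- sq) disp_act p.1 (disp_arc (iota p.2))) x =
  foldr (fun p f => Dis_act p.1 (d_arc s (iota p.2)) \o f) id sq x.
Proof.
elim: sq x => [|p sq IH] x; first by rewrite big_nil.
by rewrite big_cons disp_addE IH /= (Dis_actE _ (Dis_d_arc _)).
Qed.

End LambdaModule.

Theorem proposition29 (A : finType) (cr : seq (crossing A))
    (Q : quandle) (iota : A -> Q) (astar : A) :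
  is_MQ cr iota ->
  exists act : fracZt -> (Q -> Q) -> (Q -> Q),
    ((forall d e : Q -> Q, Dis d -> Dis e -> forall x, d (e x) = e (d x)) /\
        (forall l (d : Q -> Q), in_Lambda l -> Dis d -> Dis (act l d)) /\
        (forall l (d e : Q -> Q), in_Lambda l -> Dis d -> Dis e ->
           forall x, act l (d \o e) x = (act l d \o act l e) x) /\
        (forall l m (d : Q -> Q), in_Lambda l -> in_Lambda m -> Dis d ->
           forall x, act (l + m) d x = (act l d \o act m d) x) /\
        (forall l m (d : Q -> Q), in_Lambda l -> in_Lambda m -> Dis d ->
           forall x, act (l * m) d x = act l (act m d) x) /\
        (forall d : Q -> Q, Dis d -> forall x, act 1 d x = d x) /\
        (forall (n : nat) (d : Q -> Q), Dis d -> forall x, act n%:R d x = iter n d x) /\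
        (forall d : Q -> Q, Dis d -> forall x, act (-1) d (d x) = x) /\
        (forall (n : nat) (d : Q -> Q), Dis d -> forall x,
           act (tL ^+ n) d (iter n (beta (iota astar)) x)
           = iter n (beta (iota astar)) (d x)) /\
        (forall (n : nat) (d : Q -> Q), Dis d -> forall x,
           iter n (beta (iota astar)) (act (tL ^- n) d x)
           = d (iter n (beta (iota astar)) x)))
    /\
    (forall c, c \in cr -> forall x,
       (act (1 - tL) (d_arc (iota astar) (iota (cr_over c)))
        \o act tL (d_arc (iota astar) (iota (cr_right c)))
        \o act (-1) (d_arc (iota astar) (iota (cr_left c)))) x = x)
    /\
    (forall d : Q -> Q, Dis d -> exists s : seq (fracZt * A),
       (forall p, p \in s -> in_Lambda p.1) /\
       forall x, d x = foldr (fun p f => act p.1 (d_arc (iota astar) (iota p.2)) \o f)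
                             id s x).
Proof.
move=> MQ_iota; have [Qmed iota_cr _] := MQ_iota.
pose M := MedialQuandle Qmed; pose s : M := iota astar.
exists (Dis_act s); split; [|split].
- split; first exact: Dis_comm Qmed.
  do 9?split; [by move=> l d _; apply: (@Dis_act_Dis M)
    | by move=> l d e _; apply: (@Dis_act_comp M) | exact: (@Dis_actD M)
    | exact: (@Dis_actM M) | exact: (@Dis_act1 M) | exact: (@Dis_act_nat M) | exact: (@Dis_actN1 M)
    | exact: (@Dis_act_tn M) | exact: (@Dis_act_tNn M)].
- by move=> c cr_c; apply: (@Dis_act_crossing M); apply: iota_cr.
- move=> d Dd; have [sq L_sq d_sum] := arc_span_Dis s (is_MQ_qgen MQ_iota) Dd Dd.
  exists sq; split=> // x.
  by rewrite -[d x]/(@Displacement M d Dd x) d_sum Dis_act_sum_arcs.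
Qed.
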